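(* Let $A$ be a real $2\times2$ matrix and $B=TAT$ where $T=\begin{bmatrix}-1&0\\0&1\end{bmatrix}$. Then $\sigma_{\mathcal{K}}(A)=\sigma_{\mathcal{K}}(B)$, $\sigma_{\mathcal{K}}^{int}(A)=\sigma_{\mathcal{K}}^{int}(B)$ and $\sigma_{\mathcal{K}}^{bd}(A)=\sigma_{\mathcal{K}}^{bd}(B)$. Moreover, $\lambda$ is a type $+$ boundary L-eigenvalue of $A$ if and only if $\lambda$ is a type $-$ boundary L-eigenvalue of $B$.
   Context: Lorentz cone $\mathcal{K}=\{(x_1,x_2)^T:|x_1|\le x_2\}$. For a real $2\times 2$ matrix $A$, a real $\lambda$ is an L-eigenvalue if there is a nonzero $x\in\mathcal{K}$ with $(A-\lambda I)x\in\mathcal{K}$ and $x^T(A-\lambda I)x=0$; $\sigma_{\mathcal{K}}(A)$ is the set of L-eigenvalues; $\sigma^{int}_{\mathcal{K}}(A)$ (resp. $\sigma^{bd}_{\mathcal{K}}(A)$) is the set of those having an associated such $x$ in the interior (resp. on the boundary) of $\mathcal{K}$. For $A=\begin{bmatrix}a&b\\c&d\end{bmatrix}$, $\lambda$ is a type $+$ boundary L-eigenvalue if $\lambda=\frac{a+d+b+c}{2}$ and $a-d\le c-b$, and a type $-$ boundary L-eigenvalue if $\lambda=\frac{a+d-b-c}{2}$ and $a-d\le b-c$. *)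

From mathcomp Require Import all_boot all_order all_algebra.
From mathcomp Require Import reals.
Set Implicit Arguments. Unset Strict Implicit. Unset Printing Implicit Defensive.
Import Order.TTheory GRing.Theory Num.Theory.
Local Open Scope ring_scope.

Definition x1 {R : realType} (x : 'cV[R]_2) : R := x ord0 ord0.
Definition x2 {R : realType} (x : 'cV[R]_2) : R := x (lift ord0 ord0) ord0.

Definition inK {R : realType} (x : 'cV[R]_2) : Prop := `|x1 x| <= x2 x.
Definition inK_int {R : realType} (x : 'cV[R]_2) : Prop := `|x1 x| < x2 x.
Definition inK_bd {R : realType} (x : 'cV[R]_2) : Prop := `|x1 x| = x2 x.

Definition L_eigpair {R : realType} (A : 'M[R]_2) (lam : R) (x : 'cV[R]_2) : Prop :=
  x != 0 /\ inK x /\ inK ((A - lam%:M) *m x) /\ (x^T *m (A - lam%:M) *m x) ord0 ord0 = 0.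

Definition sigmaK {R : realType} (A : 'M[R]_2) (lam : R) : Prop :=
  exists x, L_eigpair A lam x.
Definition sigmaK_int {R : realType} (A : 'M[R]_2) (lam : R) : Prop :=
  exists x, L_eigpair A lam x /\ inK_int x.
Definition sigmaK_bd {R : realType} (A : 'M[R]_2) (lam : R) : Prop :=
  exists x, L_eigpair A lam x /\ inK_bd x.

Definition i0 : 'I_2 := ord0.
Definition i1 : 'I_2 := lift ord0 ord0.

Definition bd_plus {R : realType} (A : 'M[R]_2) (lam : R) : Prop :=
  let a := A i0 i0 in let b := A i0 i1 in let c := A i1 i0 in let d := A i1 i1 in
  lam = (a + d + b + c) / 2 /\ a - d <= c - b.
Definition bd_minus {R : realType} (A : 'M[R]_2) (lam : R) : Prop :=
  let a := A i0 i0 in let b := A i0 i1 in let c := A i1 i0 in let d := A i1 i1 in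
  lam = (a + d - b - c) / 2 /\ a - d <= b - c.

Definition Tmx {R : realType} : 'M[R]_2 := \matrix_(i, j) (if i == j then (if i == i0 then -1 else 1) else 0).

From mathcomp Require Import all_boot all_order all_algebra.
From mathcomp Require Import reals.
From mathcomp Require Import lra.
Import Order.TTheory GRing.Theory Num.Theory.
Local Open Scope ring_scope.

(* T = diag(-1, 1) is a symmetric involution that only flips the sign of x1, so
   it maps K, its interior and its boundary onto themselves.  Since
   (TAT - lam I) Tx = T (A - lam I) x and (Tx)^T (TAT - lam I) Tx = x^T (A - lam I) x,
   x |-> Tx is a bijection between the L-eigenvectors of A and of TAT for the
   same lam, preserving interior and boundary.  Finally TAT = [a -b; -c d], which
   exchanges the two formulas for boundary L-eigenvalues. *)

Section SymmetricInvolution.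
Context {R : realType} {S : 'M[R]_2}.
Hypotheses (S_sym : S^T = S) (S_invol : S *m S = 1%:M).
Hypothesis inK_S : forall x, inK x -> inK (S *m x).

Lemma mulmx_involK (x : 'cV[R]_2) : S *m (S *m x) = x.
Proof. by rewrite mulmxA S_invol mul1mx. Qed.

Lemma conjmx_involK (A : 'M[R]_2) : S *m (S *m A *m S) *m S = A.
Proof. by rewrite !mulmxA S_invol mul1mx -mulmxA S_invol mulmx1. Qed.

Lemma conjmx_subr_scalar (A : 'M[R]_2) lam :
  S *m A *m S - lam%:M = S *m (A - lam%:M) *m S.
Proof. by rewrite mulmxBr mulmxBl mul_mx_scalar -scalemxAl S_invol scalemx1. Qed.

Lemma L_eigpair_conj A lam x :
  L_eigpair A lam x -> L_eigpair (S *m A *m S) lam (S *m x).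
Proof.
move=> [x_neq0 [Kx [KAx quad0]]]; rewrite /L_eigpair conjmx_subr_scalar.
split; [|split; [|split]].
- by apply: contra x_neq0 => /eqP Sx0; rewrite -(mulmx_involK x) Sx0 mulmx0.
- exact: inK_S.
- by rewrite -mulmxA mulmx_involK -mulmxA; apply: inK_S.
- by rewrite trmx_mul S_sym -!mulmxA mulmx_involK !mulmxA -(mulmxA _ S S) S_invol mulmx1.
Qed.

Lemma L_eigvec_conj (P : 'cV[R]_2 -> Prop) :
  (forall x, P x -> P (S *m x)) -> forall A lam,
  (exists x, L_eigpair A lam x /\ P x) <->
  (exists x, L_eigpair (S *m A *m S) lam x /\ P x).
Proof.
move=> P_S A lam; split=> -[x [eig_x Px]]; exists (S *m x); split; auto.
- exact: L_eigpair_conj.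
- by rewrite -(conjmx_involK A); apply: L_eigpair_conj.
Qed.

Lemma sigmaK_conj A lam : sigmaK A lam <-> sigmaK (S *m A *m S) lam.
Proof.
split=> -[x eig_x]; exists (S *m x).
- exact: L_eigpair_conj.
- by rewrite -(conjmx_involK A); apply: L_eigpair_conj.
Qed.

End SymmetricInvolution.

Section Reflection.
Context {R : realType}.

Definition Tdiag : 'rV[R]_2 := \row_i (if i == i0 then -1 else 1).

Lemma Tmx_diag : Tmx = diag_mx Tdiag.
Proof. by apply/matrixP=> i j; rewrite !mxE; case: eqP => [->|]. Qed.

Lemma Tmx_sym : (Tmx : 'M[R]_2)^T = Tmx.
Proof. by rewrite Tmx_diag tr_diag_mx. Qed.

Lemma Tmx_invol : (Tmx : 'M[R]_2) *m Tmx = 1%:M.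
Proof.
rewrite Tmx_diag mulmx_diag -diag_const_mx; congr diag_mx.
by apply/matrixP=> i j; rewrite !mxE; case: ifP; rewrite ?mulrNN mulr1.
Qed.

Lemma x1_Tmx (x : 'cV[R]_2) : x1 (Tmx *m x) = - x1 x.
Proof. by rewrite /x1 Tmx_diag mul_diag_mx !mxE mulN1r. Qed.

Lemma x2_Tmx (x : 'cV[R]_2) : x2 (Tmx *m x) = x2 x.
Proof. by rewrite /x2 Tmx_diag mul_diag_mx !mxE mul1r. Qed.

Lemma inK_Tmx (x : 'cV[R]_2) : inK x -> inK (Tmx *m x).
Proof. by rewrite /inK x1_Tmx x2_Tmx normrN. Qed.

Lemma inK_int_Tmx (x : 'cV[R]_2) : inK_int x -> inK_int (Tmx *m x).
Proof. by rewrite /inK_int x1_Tmx x2_Tmx normrN. Qed.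

Lemma inK_bd_Tmx (x : 'cV[R]_2) : inK_bd x -> inK_bd (Tmx *m x).
Proof. by rewrite /inK_bd x1_Tmx x2_Tmx normrN. Qed.

Lemma Tmx_conjE (A : 'M[R]_2) i j :
  (Tmx *m A *m Tmx) i j = Tdiag 0 i * A i j * Tdiag 0 j.
Proof. by rewrite Tmx_diag mul_mx_diag mul_diag_mx !mxE. Qed.

Lemma bd_plus_Tmx_conj (A : 'M[R]_2) lam :
  bd_plus A lam <-> bd_minus (Tmx *m A *m Tmx) lam.
Proof.
rewrite /bd_plus /bd_minus !Tmx_conjE !mxE /=.
by split=> -[-> ineq]; split; lra.
Qed.

End Reflection.

Theorem corollary3p6 (R : realType) (A : 'M[R]_2) :
  let B := Tmx *m A *m Tmx in
  (forall lam : R, sigmaK A lam <-> sigmaK B lam) /\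
  (forall lam : R, sigmaK_int A lam <-> sigmaK_int B lam) /\
  (forall lam : R, sigmaK_bd A lam <-> sigmaK_bd B lam) /\
  (forall lam : R, bd_plus A lam <-> bd_minus B lam).
Proof.
move=> B; have Tmx_L_eigvec := L_eigvec_conj Tmx_sym Tmx_invol inK_Tmx.
split; [|split; [|split]] => lam.
- exact: sigmaK_conj Tmx_sym Tmx_invol inK_Tmx A lam.
- exact: Tmx_L_eigvec _ inK_int_Tmx A lam.
- exact: Tmx_L_eigvec _ inK_bd_Tmx A lam.
- exact: bd_plus_Tmx_conj.
Qed.
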